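(* If $\mathcal{C}\subset\mathbb{R}_{\ge2}$ is $1$-spaced (i.e. $|\alpha-\beta|\ge1$ for all distinct $\alpha,\beta\in\mathcal{C}$), then \[ \mathop{\sum\sum}_{\alpha,\beta\in\mathcal{C},\ \alpha>\beta} \frac{1}{\alpha\log \alpha} \cdot \frac{1}{\beta\log \beta} \cdot \bigg(\frac{1}{\beta}+\frac{\log \beta}{\alpha/\beta}\bigg) \ll \kappa(\mathcal{C}), \] with an absolute implied constant.
   Context: For $\alpha>0$, $\kappa(\alpha)=\frac1\alpha\prod_{p\le\alpha}(1-\frac1p)$ (product over primes), and $\kappa(\mathcal{C})=\sum_{\alpha\in\mathcal{C}}\kappa(\alpha)$. *)

From mathcomp Require Import all_boot all_order all_algebra.
From mathcomp Require Import all_classical all_reals all_analysis.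
Set Implicit Arguments. Unset Strict Implicit. Unset Printing Implicit Defensive.
Import Order.TTheory GRing.Theory Num.Theory.
Local Open Scope ring_scope.
Local Open Scope classical_set_scope.

(* kappa(a) = (1/a) * prod_{p prime, p <= a} (1 - 1/p).
   For a >= 0, a prime p satisfies p <= a iff p <= truncn a. *)
Definition kappa (R : realType) (a : R) : R :=
  a^-1 * \prod_(p < (Num.truncn a).+1 | prime p) (1 - (p%:R)^-1).

Definition kappaC (R : realType) (C : set R) : \bar R :=
  \esum_(a in C) (kappa a)%:E.

Definition lhs_term (R : realType) (al be : R) : R :=
  (al * ln al)^-1 * (be * ln be)^-1 * (be^-1 + ln be / (al / be)).

Definition one_spaced (R : realType) (C : set R) : Prop :=
  forall a b, C a -> C b -> a <> b -> 1 <= `|a - b|.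

(* Both sides are controlled by 1/(a ln a). Chebyshev's bound primorial n <= 4^n
   and Legendre's formula give sum_{p<=n} ln p / p <= ln n + ln 4; partial
   summation turns this into sum_{p<=n} -ln (1 - 1/p) <= ln ln n + O(1), i.e.
   kappa(a) >> 1/(a ln a).  For the double sum, the term equals
   (a ln a)^-1 ((b^2 ln b)^-1 + 1/a); as C is 1-spaced, b |-> floor b is
   injective, so the b < a contribute at most (ln 2)^-1 sum_k 1/(k(k-1)) to
   the first part and at most a terms to the second, whence an inner sum
   << 1/(a ln a) << kappa(a). *)

From mathcomp Require Import all_boot all_order all_algebra.
From mathcomp Require Import all_classical all_reals all_analysis.
From mathcomp Require Import zify ring lra.
Import Order.TTheory GRing.Theory Num.Theory.
Set Implicit Arguments. Unset Strict Implicit. Unset Printing Implicit Defensive.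
Local Open Scope ring_scope.
Local Open Scope classical_set_scope.

Section Chebyshev.
Local Open Scope nat_scope.

Lemma dvdn_prod_pfactor (s : seq nat) (e : nat -> nat) m :
  uniq s -> all prime s -> (forall p, p \in s -> p ^ e p %| m) ->
  \prod_(p <- s) p ^ e p %| m.
Proof.
elim: s => [|p s IHs] /=; first by rewrite big_nil dvd1n.
move=> /andP[p_notin_s uniq_s] /andP[pr_p pr_s] dvd_m.
rewrite big_cons Gauss_dvd; last first.
  apply: coprimeXl; rewrite prime_coprime // Euclid_dvd_prod // big_has.
  apply/hasP => -[q q_s]; move/allP: pr_s => /(_ q q_s) pr_q.
  rewrite Euclid_dvdX // dvdn_prime2 // => /andP[/eqP pq _].
  by rewrite pq q_s in p_notin_s.
rewrite dvd_m ?mem_head // IHs // => q q_s.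
by apply: dvd_m; rewrite inE q_s orbT.
Qed.

Lemma prime_dvd_fact p m : prime p -> (p %| m`!) = (p <= m).
Proof.
move=> pr_p; apply/idP/idP => [|p_le_m]; last by rewrite dvdn_fact ?prime_gt0.
rewrite fact_prod Euclid_dvd_prod // big_has => /hasP[i].
rewrite mem_index_iota => /andP[i_gt0 i_le_m] /(dvdn_leq i_gt0) p_le_i.
by apply: leq_trans p_le_i _; rewrite -ltnS.
Qed.

Lemma bin_mid_le m : 'C(m.*2.+1, m) <= 4 ^ m.
Proof.
have sym : 'C(m.*2.+1, m.+1) = 'C(m.*2.+1, m).
  by rewrite -bin_sub ?subSS -?addnn ?addnK //; lia.
have two_mid : 'C(m.*2.+1, m) + 'C(m.*2.+1, m.+1) <= 2 ^ m.*2.+1.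
  rewrite -[2]/(1 + 1) expnDn; under eq_bigr do rewrite !exp1n !muln1.
  rewrite -(big_mkord xpredT (binomial _)).
  have [m_le_mid mid_le_top] : m <= m.+2 /\ m.+2 <= m.*2.+2 by lia.
  rewrite (@big_cat_nat _ _ _ m) ?(leq_trans m_le_mid) //.
  rewrite (@big_cat_nat _ _ _ m.+2 m) //.
  by rewrite big_nat_recr //= big_nat1 addnCA leq_addr.
by rewrite sym addnn -!mul2n expnS expnM leq_pmul2l // mul2n in two_mid.
Qed.

Definition primorial n := \prod_(0 <= p < n.+1 | prime p) p.

Lemma primorialS n :
  primorial n.+1 = primorial n * (if prime n.+1 then n.+1 else 1).
Proof. by rewrite /primorial big_mkcond big_nat_recr //= -big_mkcond. Qed.

Lemma primorial_odd_le m :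
  primorial m.*2.+1 <= primorial m.+1 * 4 ^ m.
Proof.
rewrite /primorial (@big_cat_nat _ _ _ m.+2) //=; last by lia.
rewrite leq_mul2l; apply/orP; right.
set X := \prod_(m.+2 <= p < m.*2.+2 | prime p) p.
have X_dvd : X %| 'C(m.*2.+1, m) * m`!.
  have -> : 'C(m.*2.+1, m) * m`! = \prod_(m.+2 <= k < m.*2.+2) k.
    have [le_m le_m1] : m <= m.*2.+1 /\ m.+1 <= m.*2.+1 by lia.
    apply/eqP; rewrite -(eqn_pmul2l (fact_gt0 m.+1)) -fact_split //.
    rewrite -(bin_fact le_m) (_ : m.*2.+1 - m = m.+1); last by lia.
    by rewrite mulnC -mulnA.
  by rewrite [X in _ %| X](bigID prime) dvdn_mulr.
have X_coprime : coprime X m`!.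
  rewrite /X big_seq_cond; apply: (big_ind (coprime^~ m`!)) => [|x y|p].
  - exact: coprime1n.
  - by rewrite coprimeMl => -> ->.
  rewrite mem_index_iota => /andP[/andP[lt_m_p _] pr_p].
  by rewrite prime_coprime // prime_dvd_fact // -ltnNge ltnW.
apply: leq_trans (bin_mid_le m).
by apply: dvdn_leq; [rewrite bin_gt0; lia | rewrite -(Gauss_dvdl _ X_coprime)].
Qed.

Lemma primorial_le n : primorial n <= 4 ^ n.
Proof.
elim/ltn_ind: n => n IHn.
have [n_le2|n_gt2] := leqP n 2.
  by case: n n_le2 {IHn} => [|[|[|]]] //; rewrite /primorial unlock.
have [n_odd|/negPf n_even] := boolP (odd n).
  have n_eq : n = (n./2).*2.+1 by rewrite -[LHS]odd_double_half n_odd.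
  rewrite n_eq; apply: leq_trans (primorial_odd_le _) _.
  rewrite -addnn expnS expnD mulnA leq_pmul2r ?expn_gt0 // -expnS.
  by apply: IHn; lia.
case: n IHn n_gt2 n_even => // n IHn n_gt2 n_even; rewrite primorialS.
have /negPf-> : ~~ prime n.+1.
  by apply/negP => /even_prime[n_eq2|]; [rewrite n_eq2 in n_gt2 | rewrite n_even].
by rewrite muln1 (leq_trans (IHn n _)) ?leq_exp2l.
Qed.

Lemma prod_prime_pow_dvd_fact n :
  \prod_(0 <= p < n.+1 | prime p) p ^ (n %/ p) %| n`!.
Proof.
rewrite -big_filter; apply: dvdn_prod_pfactor => [||p].
- by rewrite filter_uniq ?iota_uniq.
- by apply/allP => p; rewrite mem_filter => /andP[].
rewrite mem_filter => /andP[pr_p _].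
rewrite pfactor_dvdn ?fact_gt0 // logn_fact //.
by case: n => [|n]; rewrite ?div0n // big_ltn // expn1 leq_addr.
Qed.

Lemma prod_prime_powS_le n :
  \prod_(0 <= p < n.+1 | prime p) p ^ (n %/ p).+1 <= n ^ n * 4 ^ n.
Proof.
have fact_le : n`! <= n ^ n.
  have -> : n ^ n = \prod_(1 <= i < n.+1) n by rewrite prod_nat_const_nat subn1.
  rewrite fact_prod big_seq [leqRHS]big_seq.
  by apply: leq_prod => i; rewrite mem_index_iota ltnS => /andP[].
under eq_bigr do rewrite expnSr.
rewrite big_split /= leq_mul ?primorial_le //.
by apply: leq_trans fact_le; rewrite dvdn_leq ?fact_gt0 ?prod_prime_pow_dvd_fact.
Qed.

End Chebyshev.

Section Mertens.
Variable R : realType.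

Lemma ln_sub_ge (x y : R) : 0 < x -> 0 < y -> 1 - x / y <= ln y - ln x.
Proof.
move=> x_gt0 y_gt0; have ratio_gt0 : 0 < x / y by apply: divr_gt0.
have /le_ln1Dx : -1 < x / y - 1 by lra.
rewrite subrKC ln_div ?posrE //; lra.
Qed.

Lemma euler_factor_le (x : R) : 0 < x -> - ln (1 - (x + 1)^-1) <= x^-1.
Proof.
move=> x_gt0; have inv_gt0 : 0 < x^-1 by rewrite invr_gt0.
have -> : 1 - (x + 1)^-1 = (1 + x^-1)^-1 by field; apply/andP; split; lra.
by rewrite lnV ?posrE ?opprK ?le_ln1Dx //; lra.
Qed.

Lemma ln_prod_natr (I : Type) (r : seq I) (P : pred I) (F : I -> nat) :
  (forall i, P i -> 0 < F i)%N ->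
  ln ((\prod_(i <- r | P i) F i)%:R : R) = \sum_(i <- r | P i) ln (F i)%:R.
Proof.
move=> F_gt0; suff [] : (0 < \prod_(i <- r | P i) F i)%N /\
    ln ((\prod_(i <- r | P i) F i)%:R : R) =
      \sum_(i <- r | P i) ln (F i)%:R by [].
elim/big_rec2: _ => [|i x y Pi [x_gt0 <-]]; first by rewrite ln1.
by rewrite muln_gt0 F_gt0 // natrM lnM ?posrE ?ltr0n ?F_gt0.
Qed.

Definition mertens_sum n : R :=
  \sum_(0 <= p < n.+1 | prime p) ln p%:R / p%:R.

Definition euler_log n : R :=
  \sum_(0 <= p < n.+1 | prime p) - ln (1 - p%:R^-1).

Lemma mertens_sumS n : mertens_sum n.+1 =
  mertens_sum n + (if prime n.+1 then ln n.+1%:R / n.+1%:R else 0).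
Proof. by rewrite /mertens_sum big_mkcond big_nat_recr //= -big_mkcond. Qed.

Lemma euler_logS n : euler_log n.+1 =
  euler_log n + (if prime n.+1 then - ln (1 - n.+1%:R^-1) else 0).
Proof. by rewrite /euler_log big_mkcond big_nat_recr //= -big_mkcond. Qed.

Lemma mertens_sum_le n : (0 < n)%N -> mertens_sum n <= ln n%:R + ln 4.
Proof.
move=> n_gt0; have n_pos : (0 : R) < n%:R by rewrite ltr0n.
have four_pos : (0 : R) < 4 by [].
have pow_gt0 p : prime p -> (0 < p ^ (n %/ p).+1)%N.
  by move=> /prime_gt0 p_gt0; rewrite expn_gt0 p_gt0.
rewrite -(ler_pM2l n_pos); apply: le_trans (_ : \sum_(0 <= p < n.+1 | prime p)
    ln (p ^ (n %/ p).+1)%:R <= _).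
  rewrite /mertens_sum mulr_sumr; apply: ler_sum => p pr_p.
  have p_pos : (0 : R) < p%:R by rewrite ltr0n prime_gt0.
  rewrite natrX lnXn // -[ln _ *+ _]mulr_natl mulrCA mulrC; apply: ler_wpM2r.
    by rewrite ln_ge0 // ler1n prime_gt0.
  by rewrite ler_pdivrMr // -natrM ler_nat ltnW // ltn_ceil ?prime_gt0.
rewrite -ln_prod_natr // mulrDr !mulr_natl -(lnXn n n_pos) -(lnXn n four_pos).
rewrite -lnM ?posrE ?exprn_gt0 // -natrX -(natrX R 4) -natrM.
rewrite ler_ln ?posrE ?ltr0n ?ler_nat ?prod_prime_powS_le ?prodn_cond_gt0 //.
by rewrite muln_gt0 !expn_gt0 n_gt0.
Qed.


(* A discrete partial-summation primitive: by [mertens_sum_le], its increments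
   dominate those of [euler_log]. *)
Definition mertens_potential n : R :=
  mertens_sum n / ln n%:R + ln (ln n%:R) - ln 4 / ln n%:R - n%:R^-1.

Lemma euler_log_increment_le n : (2 <= n)%N ->
  euler_log n.+1 - euler_log n <= mertens_potential n.+1 - mertens_potential n.
Proof.
move=> n_ge2; rewrite /mertens_potential euler_logS mertens_sumS.
set N : R := n%:R; set P : R := n.+1%:R.
have N_ge2 : 2 <= N by rewrite /N (ler_nat R 2 n).
have P_eq : P = N + 1 by rewrite /P -addn1 natrD.
have lnN_gt0 : 0 < ln N by apply: ln_gt0; lra.
have lnP_gt0 : 0 < ln P by apply: ln_gt0; lra.
have lnN_le : ln N <= ln P by rewrite ler_ln ?posrE; lra.
have inv_lnP_le : (ln P)^-1 <= (ln N)^-1 by rewrite lef_pV2 ?posrE.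
have mertens_le := mertens_sum_le (ltnW n_ge2); rewrite -/N in mertens_le.
clearbody N P.
have mertens_diff : mertens_sum n * ((ln N)^-1 - (ln P)^-1) <=
    (ln N + ln 4) * ((ln N)^-1 - (ln P)^-1) by apply: ler_wpM2r; lra.
have lnln_diff := ln_sub_ge lnN_gt0 lnP_gt0.
have prime_term : (if prime n.+1 then - ln (1 - P^-1) else 0) <=
    (if prime n.+1 then ln P / P else 0) / ln P + N^-1 - P^-1.
  case: ifP => _; last by rewrite mul0r add0r subr_ge0 lef_pV2 ?posrE; lra.
  rewrite mulrAC divff ?mul1r ?gt_eqF // addrAC subrr add0r P_eq.
  by rewrite euler_factor_le //; lra.
have lnN_inv : ln N * (ln N)^-1 = 1 by rewrite divff //; lra.
lra.
Qed.

Lemma mertens_potential_le n : (2 <= n)%N ->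
  mertens_potential n <= ln (ln n%:R) + 1.
Proof.
move=> n_ge2; have N_ge2 : (2 : R) <= n%:R by rewrite (ler_nat R 2 n).
have lnN_gt0 : 0 < ln (n%:R : R) by apply: ln_gt0; lra.
have inv_gt0 : 0 < (ln (n%:R : R))^-1 by rewrite invr_gt0.
have := mertens_sum_le (ltnW n_ge2).
rewrite /mertens_potential -(ler_pM2r inv_gt0) mulrDl divff ?gt_eqF //.
have : 0 <= (n%:R : R)^-1 by rewrite invr_ge0; lra.
lra.
Qed.

Lemma euler_log_le_lnln : exists B : R, forall n, (2 <= n)%N ->
  euler_log n <= ln (ln n%:R) + B.
Proof.
exists (euler_log 2 - mertens_potential 2 + 1).
have drift n : (2 <= n)%N ->
    euler_log n - mertens_potential n <= euler_log 2 - mertens_potential 2.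
  elim: n => // n IHn n1_ge2; have [n_lt2|n_ge2] := ltnP n 2.
    by have -> : n = 1%N by lia.
  by have := euler_log_increment_le n_ge2; have := IHn n_ge2; lra.
by move=> n n_ge2; have := drift n n_ge2; have := mertens_potential_le n_ge2; lra.
Qed.

Lemma prod_prime_factor_expR n :
  \prod_(p < n.+1 | prime p) (1 - (p%:R : R)^-1) = expR (- euler_log n).
Proof.
rewrite /euler_log -sumrN expR_sum big_mkord; apply: eq_bigr => p pr_p.
rewrite opprK lnK // posrE subr_gt0 invf_lt1 ?ltr1n ?prime_gt1 //.
by rewrite ltr0n prime_gt0.
Qed.

Lemma inv_mul_ln_le_kappa : exists2 c : R, 0 < c &
  forall a : R, 2 <= a -> (a * ln a)^-1 <= c * kappa a.
Proof.
have [B euler_log_leB] := euler_log_le_lnln.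
exists (expR B); first exact: expR_gt0.
move=> a a_ge2; rewrite /kappa prod_prime_factor_expR.
set n := Num.truncn a.
have n_ge2 : (2 <= n)%N by rewrite /n truncn_ge_nat //; lra.
have N_ge2 : (2 : R) <= n%:R by rewrite (ler_nat R 2 n).
have lnN_gt0 : 0 < ln (n%:R : R) by apply: ln_gt0; lra.
have lnN_le : ln (n%:R : R) <= ln a.
  by rewrite ler_ln ?posrE ?truncn_le; lra.
have : expR (- (ln (ln n%:R) + B)) <= expR (- euler_log n).
  by rewrite ler_expR lerN2 euler_log_leB.
rewrite opprD expRD (expRN (ln _)) lnK ?posrE // => /(ler_wpM2l (expR_ge0 B)).
rewrite mulrCA expRxMexpNx_1 mulr1 => lnN_inv_le.
rewrite invfM mulrCA; apply: ler_wpM2l; first by rewrite invr_ge0; lra.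
by apply: le_trans lnN_inv_le; rewrite lef_pV2 ?posrE; lra.
Qed.

End Mertens.

Section SpacedSums.
Variable R : realType.

Lemma ge0_subset_esum (T : choiceType) (A B : set T) (f : T -> \bar R) :
  A `<=` B -> (forall x, B x -> 0 <= f x)%E ->
  (\esum_(x in A) f x <= \esum_(x in B) f x)%E.
Proof.
move=> AB f_ge0; apply: ge_ereal_sup => _ [X [finX XA] <-].
by apply: esum_ge; exists X => //; split => //; apply: subset_trans XA AB.
Qed.

Lemma esumZl_le (T : choiceType) (I : set T) (k : R) (f : T -> R) : 0 <= k ->
  (\esum_(x in I) (k * f x)%:E <= k%:E * \esum_(x in I) (f x)%:E)%E.
Proof.
move=> k_ge0; apply: ge_ereal_sup => _ [X [finX XI] <-].
rewrite fsumEFin // -mulr_fsumr EFinM -fsumEFin //.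
by rewrite lee_wpmul2l ?lee_fin //; apply: ereal_sup_ubound; exists X.
Qed.

Lemma esum_inj_le_sum_nat (T : choiceType) (J : set T) (e : T -> nat)
    (g : nat -> R) m n :
  set_inj J e -> (forall x, J x -> m <= e x < n)%N ->
  (forall k, (m <= k < n)%N -> 0 <= g k) ->
  (\esum_(x in J) (g (e x))%:E <= (\sum_(m <= k < n) g k)%:E)%E.
Proof.
move=> e_inj e_range g_ge0.
have g_ge0' k : k \in index_iota m n -> (0 <= (g k)%:E)%E.
  by rewrite mem_index_iota lee_fin => /g_ge0.
rewrite -(esum_image J e (fun k => (g k)%:E)) //.
apply: le_trans (ge0_subset_esum (B := [set` index_iota m n]) _ _) _.
- by move=> _ [x /e_range x_range <-]; rewrite /= mem_index_iota.
- by move=> k /g_ge0'.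
rewrite esum_fset; [|exact: finite_seq|by move=> k; rewrite inE => /g_ge0'].
by rewrite -fsbig_seq ?iota_uniq // sumEFin.
Qed.

Lemma sum_inv_telescope_le m n :
  \sum_(m <= k < n) (((k.-1)%:R : R)^-1 - (k%:R)^-1) <= (m.-1)%:R^-1.
Proof.
have [m_le_n|/ltnW n_le_m] := leqP m n; last by rewrite big_geq // invr_ge0.
rewrite (telescope_sumr_eq (fun k => - ((k.-1)%:R : R)^-1)) //; last first.
  by move=> k _; rewrite opprK addrC.
have : 0 <= ((n.-1)%:R : R)^-1 by rewrite invr_ge0.
lra.
Qed.

Lemma one_spaced_truncn_inj (C : set R) :
  (forall x, C x -> 0 <= x) -> one_spaced C -> set_inj C Num.truncn.
Proof.
move=> C_ge0 C_sp x y /set_mem Cx /set_mem Cy eq_trunc.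
apply: contrapT => /(C_sp _ _ Cx Cy).
have /andP[] := truncn_itv (C_ge0 _ Cx); have /andP[] := truncn_itv (C_ge0 _ Cy).
rewrite eq_trunc ler_normr; lra.
Qed.

Lemma inv_sq_ln_le (b : R) : 2 <= b ->
  (b ^+ 2 * ln b)^-1 <=
    (ln 2)^-1 * ((((Num.truncn b).-1)%:R)^-1 - ((Num.truncn b)%:R)^-1).
Proof.
move=> b_ge2; set k := Num.truncn b.
have k_ge2 : (2 <= k)%N by rewrite /k truncn_ge_nat //; lra.
have k_le : (k%:R : R) <= b by rewrite /k truncn_le; lra.
have k_pred : (k.-1%:R : R) = k%:R - 1.
  by rewrite -[in RHS](@prednK k) -?natr1 ?addrK //; lia.
have K_ge2 : (2 : R) <= k%:R by rewrite (ler_nat R 2 k).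
rewrite k_pred (_ : _ - _ = (k%:R * (k%:R - 1))^-1); last first.
  by field; apply/andP; split; apply/eqP; lra.
have ln2_gt0 : 0 < ln (2 : R) by apply: ln_gt0; lra.
have ln2_le : ln 2 <= ln b by rewrite ler_ln ?posrE; lra.
rewrite invfM mulrC; apply: ler_pM; rewrite ?invr_ge0 ?exprn_ge0; try lra.
- by rewrite lef_pV2 ?posrE //; lra.
- by rewrite lef_pV2 ?posrE ?exprn_gt0; nra.
Qed.

Lemma lhs_termE (a b : R) : 1 < a -> 1 < b ->
  lhs_term a b = (a * ln a)^-1 * ((b ^+ 2 * ln b)^-1 + a^-1).
Proof.
move=> a_gt1 b_gt1; have lna_gt0 : 0 < ln a by rewrite ln_gt0.
have lnb_gt0 : 0 < ln b by rewrite ln_gt0.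
rewrite /lhs_term; field; rewrite !gt_eqF //; lra.
Qed.

Lemma lhs_term_ge0 (a b : R) : 1 < a -> 1 < b -> 0 <= lhs_term a b.
Proof.
move=> a_gt1 b_gt1; have lna_gt0 : 0 < ln a by rewrite ln_gt0.
have lnb_gt0 : 0 < ln b by rewrite ln_gt0.
rewrite lhs_termE // mulr_ge0 ?addr_ge0 ?invr_ge0 ?mulr_ge0 ?exprn_ge0 //; lra.
Qed.

Lemma esum_lhs_term_lt_le (C : set R) (a : R) :
  (forall x, C x -> 2 <= x) -> one_spaced C -> 2 <= a ->
  (\esum_(b in [set b | C b /\ (b < a)%R]) (lhs_term a b)%:E <=
    ((a * ln a)^-1 * ((ln 2)^-1 + 1))%:E)%E.
Proof.
move=> C_ge2 C_sp a_ge2; set J := [set b | C b /\ b < a].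
have J_ge2 b : J b -> 2 <= b by move=> [/C_ge2].
have lna_gt0 : 0 < ln a by apply: ln_gt0; lra.
have ln2_gt0 : 0 < ln (2 : R) by apply: ln_gt0; lra.
set c := (a * ln a)^-1; have c_ge0 : 0 <= c by rewrite invr_ge0 mulr_ge0 //; lra.
pose g k : R := c * ((ln 2)^-1 * (((k.-1)%:R)^-1 - (k%:R)^-1) + a^-1).
have g_ge0 k : (2 <= k < (Num.truncn a).+1)%N -> 0 <= g k.
  move=> /andP[k_ge2 _].
  have k_pred_gt0 : (0 : R) < k.-1%:R by rewrite ltr0n; lia.
  have tele_ge0 : 0 <= (k.-1%:R : R)^-1 - (k%:R)^-1.
    by rewrite subr_ge0 lef_pV2 ?posrE ?ler_nat ?leq_pred ?ltr0n //; lia.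
  by rewrite /g mulr_ge0 // addr_ge0 ?mulr_ge0 ?invr_ge0 //; lra.
have term_le b : J b -> ((lhs_term a b)%:E <= (g (Num.truncn b))%:E)%E.
  move=> /J_ge2 b_ge2; rewrite lee_fin lhs_termE; try lra.
  by apply: ler_wpM2l => //; rewrite lerD2r inv_sq_ln_le.
apply: le_trans (le_esum term_le) _.
have trunc_inj : set_inj J Num.truncn.
  apply: one_spaced_truncn_inj => [b /J_ge2|b b' [Cb _] [Cb' _]]; first lra.
  exact: C_sp.
have trunc_range b : J b -> (2 <= Num.truncn b < (Num.truncn a).+1)%N.
  move=> [/C_ge2 b_ge2 /ltW b_le_a].
  by rewrite ltnS le_truncn // andbT truncn_ge_nat //; lra.
apply: le_trans (esum_inj_le_sum_nat trunc_inj trunc_range g_ge0) _.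
rewrite lee_fin /g -mulr_sumr; apply: ler_wpM2l => //.
rewrite big_split /= -mulr_sumr sumr_const_nat; apply: lerD.
  rewrite -[leRHS]mulr1; apply: ler_wpM2l; first by rewrite invr_ge0 ltW.
  by apply: le_trans (sum_inv_telescope_le _ _) _; rewrite invr1.
rewrite -mulr_natl ler_pdivrMr; last lra.
have trunc_le : (Num.truncn a)%:R <= a by rewrite truncn_le; lra.
by rewrite mul1r (le_trans _ trunc_le) // ler_nat; lia.
Qed.

End SpacedSums.

Theorem lemma2p14 (R : realType) :
  exists K : R, 0 < K /\
  forall C : set R,
    (forall a, C a -> 2 <= a) ->
    one_spaced C ->
    (\esum_(ab in [set ab : R * R | C ab.1 /\ C ab.2 /\ (ab.2 < ab.1)%R])
        (lhs_term ab.1 ab.2)%:E <= K%:E * kappaC C)%E.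
Proof.
have [c c_gt0 inv_le_kappa] := inv_mul_ln_le_kappa R.
have ln2_gt0 : 0 < ln (2 : R) by apply: ln_gt0; lra.
have cst_gt0 : 0 < (ln (2 : R))^-1 + 1 by rewrite addr_gt0 ?invr_gt0.
exists (((ln 2)^-1 + 1) * c); split => [|C C_ge2 C_sp]; first exact: mulr_gt0.
rewrite -(esum_esum (J := fun a => [set b | C b /\ b < a])
                    (a := fun a b => (lhs_term a b)%:E)); last first.
  move=> a b /C_ge2 a_ge2 [/C_ge2 b_ge2 _]; rewrite lee_fin lhs_term_ge0 //; lra.
apply: le_trans (esumZl_le _ _ (ltW (mulr_gt0 cst_gt0 c_gt0))).
apply: le_esum => a Ca; have a_ge2 := C_ge2 _ Ca.
apply: le_trans (esum_lhs_term_lt_le C_ge2 C_sp a_ge2) _.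
rewrite lee_fin mulrC -mulrA; apply: ler_wpM2l; [lra | exact: inv_le_kappa].
Qed.
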